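(* Let $M$ be an algebraic number field of degree $m$ with ring of integers $\mathbb{Z}_M$ and integral basis $(1,\omega_2,\ldots,\omega_m)$. Let $\alpha$ be an algebraic integer over $M$ of degree $n$ over $M$, let $K=M(\alpha)$, and let $0\neq\mu\in\mathbb{Z}_M$. Define the constants $c_{hji}$, $c_{hi}$, $c_2$, $c_5$, $d_{hi}$ as follows: \[ c_{hji}=\tfrac12\left|\alpha^{(hj)}-\alpha^{(hi)}\right|\ (i\ne j),\qquad c_{hi}=\frac{|\mu^{(h)}|}{\prod_{1\le j\le n,\,j\ne i}c_{hji}},\qquad c_5=2c_2\,\overline{|\alpha|},\qquad d_{hi}=c_{hi}\,c_5^{\,n-1}, \] where $c_2$ is the row norm (maximum absolute row sum) of $S^{-1}$, $S$ being the $m\times m$ matrix whose $j$-th row is $(1,\omega_2^{(j)},\ldots,\omega_m^{(j)})$. Fix indices $1\le h\le m$, $1\le i\le n$ and a constant $H>0$. Let $\mathcal{L}\subset\mathbb{R}^{2m+2}$ be the lattice generated by the $2m$ columns of the $(2m+2)\times 2m$ matrix whose first $2m$ rows form the $2m\times 2m$ identity matrix and whose last two rows are \[ \big(H\,\mathrm{Re}(1),\ H\,\mathrm{Re}(\omega_2^{(h)}),\ldots,H\,\mathrm{Re}(\omega_m^{(h)}),\ H\,\mathrm{Re}(\alpha^{(hi)}),\ H\,\mathrm{Re}(\alpha^{(hi)}\omega_2^{(h)}),\ldots,H\,\mathrm{Re}(\alpha^{(hi)}\omega_m^{(h)})\big), \] \[ \big(H\,\mathrm{Im}(1),\ H\,\mathrm{Im}(\omega_2^{(h)}),\ldots,H\,\mathrm{Im}(\omega_m^{(h)}),\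 H\,\mathrm{Im}(\alpha^{(hi)}),\ H\,\mathrm{Im}(\alpha^{(hi)}\omega_2^{(h)}),\ldots,H\,\mathrm{Im}(\alpha^{(hi)}\omega_m^{(h)})\big) \] (so the first entries of these two rows are $H$ and $0$). Let $b_1$ be the first vector of an LLL-reduced basis of $\mathcal{L}$. Assume that $x_1,\ldots,x_m,y_1,\ldots,y_m$ are integers, not all zero, with $A=\max(\max_k|x_k|,\max_k|y_k|)$, such that \[ \Big|x_1+\omega_2^{(h)}x_2+\cdots+\omega_m^{(h)}x_m-\alpha^{(hi)}y_1-\alpha^{(hi)}\omega_2^{(h)}y_2-\cdots-\alpha^{(hi)}\omega_m^{(h)}y_m\Big|\le d_{hi}\,A^{1-n}. \] If $A\le A_0$ for some constant $A_0>0$ and \[ |b_1|\ge\sqrt{(2m+1)\,2^{2m-1}}\cdot A_0, \] then \[ A\le\left(\frac{d_{hi}\,H}{A_0}\right)^{\frac{1}{n-1}}. \]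
   Context: Let $\sigma_1,\ldots,\sigma_m$ be the embeddings of $M$ into $\mathbb{C}$; for $\gamma\in M$ write $\gamma^{(j)}=\sigma_j(\gamma)$. Let $f(x)$ be the monic relative defining polynomial of $\alpha$ over $M$, and for $j=1,\ldots,m$ let $\alpha^{(j1)},\ldots,\alpha^{(jn)}$ be the roots of the polynomial obtained by applying $\sigma_j$ to the coefficients of $f$. The size $\overline{|\alpha|}$ is $\max_{j,k}|\alpha^{(jk)}|$. $|\cdot|$ on vectors is the Euclidean norm. An LLL-reduced basis is meant in the sense of Lenstra–Lenstra–Lovász (with the standard parameter $3/4$, as extended by Pohst), so that its first vector satisfies $|b_1|^2\le 2^{2m-1}|v|^2$ for every nonzero $v\in\mathcal{L}$ (the lattice having rank $2m$). *)

From HB Require Import structures.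
From mathcomp Require Import all_boot all_order all_algebra all_field.
From mathcomp Require Import complex.
From mathcomp Require Import reals exp.

Set Implicit Arguments.
Unset Strict Implicit.
Unset Printing Implicit Defensive.

Import Order.TTheory GRing.Theory Num.Theory.
Local Open Scope ring_scope.
Local Open Scope complex_scope.
Local Open Scope ring_scope.

Definition alg_int {T : nzRingType} (x : T) : Prop :=
  exists p : {poly int}, p \is monic /\ root (map_poly (fun z : int => z%:~R) p) x.

Section Defs.
Variable R : realType.

Definition creal (z : R[i]) : R := let: a +i* _ := z in a.
Definition cimag (z : R[i]) : R := let: _ +i* b := z in b.
Definition cabs (z : R[i]) : R := Num.sqrt (creal z ^+ 2 + cimag z ^+ 2).

(* sigma : 'I_m -> embeddings of M into C, pairwise distinct;
   together with m = dim_Q M these are all the embeddings. *)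
Definition distinct_embeddings (M : fieldExtType rat) (m : nat)
  (sigma : 'I_m -> {rmorphism M -> R[i]}) : Prop :=
  forall j j' : 'I_m, j != j' -> exists x : M, sigma j x != sigma j' x.

Definition integral_basis (M : fieldExtType rat) (m : nat) (omega : 'I_m -> M) : Prop :=
  [/\ forall k : 'I_m, val k = 0%N -> omega k = 1,
      forall k, alg_int (omega k),
      forall x : M, alg_int x ->
        exists z : 'I_m -> int, x = \sum_(k < m) (z k)%:~R * omega k
    & forall z : 'I_m -> int, \sum_(k < m) (z k)%:~R * omega k = 0 ->
        forall k, z k = 0].

Definition c_hji (m n : nat) (rts : 'I_m -> 'I_n -> R[i]) (h : 'I_m) (j i : 'I_n) : R :=
  cabs (rts h j - rts h i) / 2.

Definition c_hi (M : fieldExtType rat) (m n : nat) (sigma : 'I_m -> {rmorphism M -> R[i]})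
  (rts : 'I_m -> 'I_n -> R[i]) (mu : M) (h : 'I_m) (i : 'I_n) : R :=
  cabs (sigma h mu) / \prod_(j < n | j != i) c_hji rts h j i.

Definition Smat (M : fieldExtType rat) (m : nat) (sigma : 'I_m -> {rmorphism M -> R[i]})
  (omega : 'I_m -> M) : 'M[R[i]]_m := \matrix_(j, k) sigma j (omega k).

Definition c2 (M : fieldExtType rat) (m : nat) (sigma : 'I_m -> {rmorphism M -> R[i]})
  (omega : 'I_m -> M) : R :=
  \big[Num.max/0]_(j < m) \sum_(k < m) cabs (invmx (Smat sigma omega) j k).

Definition house (m n : nat) (rts : 'I_m -> 'I_n -> R[i]) : R :=
  \big[Num.max/0]_(j < m) \big[Num.max/0]_(k < n) cabs (rts j k).

Definition c5 (M : fieldExtType rat) (m n : nat) (sigma : 'I_m -> {rmorphism M -> R[i]})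
  (omega : 'I_m -> M) (rts : 'I_m -> 'I_n -> R[i]) : R :=
  2 * c2 sigma omega * house rts.

Definition d_hi (M : fieldExtType rat) (m n : nat) (sigma : 'I_m -> {rmorphism M -> R[i]})
  (omega : 'I_m -> M) (rts : 'I_m -> 'I_n -> R[i]) (mu : M) (h : 'I_m) (i : 'I_n) : R :=
  c_hi sigma rts mu h i * c5 sigma omega rts ^+ (n - 1).

Definition lat_entry (M : fieldExtType rat) (m n : nat) (sigma : 'I_m -> {rmorphism M -> R[i]})
  (omega : 'I_m -> M) (rts : 'I_m -> 'I_n -> R[i]) (h : 'I_m) (i : 'I_n) (k : 'I_(m + m)) : R[i] :=
  match split k with
  | inl a => sigma h (omega a)
  | inr b => rts h i * sigma h (omega b)
  end.

Definition lat_gen (M : fieldExtType rat) (m n : nat) (sigma : 'I_m -> {rmorphism M -> R[i]})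
  (omega : 'I_m -> M) (rts : 'I_m -> 'I_n -> R[i]) (h : 'I_m) (i : 'I_n) (H : R)
  : 'M[R]_(m + m + (1 + 1), m + m) :=
  col_mx (1%:M)
    (col_mx (\row_k (H * creal (lat_entry sigma omega rts h i k)))
            (\row_k (H * cimag (lat_entry sigma omega rts h i k)))).

Definition in_lattice (N k : nat) (G : 'M[R]_(N, k)) (v : 'cV[R]_N) : Prop :=
  exists z : 'I_k -> int, v = \sum_(l < k) (z l)%:~R *: col l G.

Definition dot (N : nat) (u v : 'cV[R]_N) : R := \sum_(l < N) u l 0 * v l 0.
Definition enorm (N : nat) (v : 'cV[R]_N) : R := Num.sqrt (dot v v).

Definition lattice_basis (N k : nat) (G : 'M[R]_(N, k)) (bs : seq 'cV[R]_N) : Prop :=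
  [/\ size bs = k,
      forall b, b \in bs -> in_lattice G b,
      forall v, in_lattice G v ->
        exists z : 'I_k -> int, v = \sum_(l < k) (z l)%:~R *: nth 0 bs l
    & forall c : 'I_k -> R, \sum_(l < k) c l *: nth 0 bs l = 0 -> forall l, c l = 0].

Definition gs_step (N : nat) (acc : seq 'cV[R]_N) (v : 'cV[R]_N) : seq 'cV[R]_N :=
  rcons acc (v - \sum_(c <- acc) (dot v c / dot c c) *: c).
Definition gram_schmidt (N : nat) (bs : seq 'cV[R]_N) : seq 'cV[R]_N :=
  foldl (@gs_step N) [::] bs.
Definition gs_vec (N : nat) (bs : seq 'cV[R]_N) (i : nat) : 'cV[R]_N :=
  nth 0 (gram_schmidt bs) i.
Definition gs_mu (N : nat) (bs : seq 'cV[R]_N) (i j : nat) : R :=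
  dot (nth 0 bs i) (gs_vec bs j) / dot (gs_vec bs j) (gs_vec bs j).

Definition LLL_reduced (N : nat) (bs : seq 'cV[R]_N) : Prop :=
  (forall i j : nat, (j < i < size bs)%N -> `|gs_mu bs i j| <= 1 / 2) /\
  (forall i : nat, (0 < i < size bs)%N ->
     (3 / 4 - gs_mu bs i i.-1 ^+ 2) * dot (gs_vec bs i.-1) (gs_vec bs i.-1)
       <= dot (gs_vec bs i) (gs_vec bs i)).

End Defs.

From HB Require Import structures.
From mathcomp Require Import all_boot all_order all_algebra all_field.
From mathcomp Require Import complex.
From mathcomp Require Import reals exp.
From mathcomp Require Import ring lra.
Import Order.TTheory GRing.Theory Num.Theory.
Local Open Scope ring_scope.

(* The integer vector (x, -y) is the coordinate vector of a lattice vector v whose first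
   2m entries are x and -y and whose last two are H Re L and H Im L, where L is the linear
   form of the hypothesis; hence |v|^2 <= 2m A^2 + H^2 |L|^2.  For an LLL-reduced basis the
   Lovasz condition gives |b*_(k-1)|^2 <= 2 |b*_k|^2, and |b*_k| <= |v| when k is the last
   index at which v has a nonzero coordinate, so |b_1|^2 <= 2^(2m-1) |v|^2.  Comparing with
   the assumed lower bound on |b_1| and using A <= A0 leaves A0 <= H |L| <= H d_hi A^(1-n),
   which rearranges to the claim. *)

Section Dot.
Context {R : realType} {N : nat}.
Implicit Types u v w : 'cV[R]_N.

Lemma dotC u v : dot u v = dot v u.
Proof. by apply: eq_bigr => l _; rewrite mulrC. Qed.

Lemma dotDl u v w : dot (u + v) w = dot u w + dot v w.
Proof. by rewrite /dot -big_split; apply: eq_bigr => l _; rewrite !mxE mulrDl. Qed.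

Lemma dotZl a u w : dot (a *: u) w = a * dot u w.
Proof. by rewrite /dot mulr_sumr; apply: eq_bigr => l _; rewrite !mxE mulrA. Qed.

Lemma dot0l w : dot 0 w = 0.
Proof. by rewrite /dot big1 // => l _; rewrite mxE mul0r. Qed.

Lemma dotBl u v w : dot (u - v) w = dot u w - dot v w.
Proof. by rewrite dotDl -scaleN1r dotZl mulN1r. Qed.

Lemma dot_suml (I : Type) (r : seq I) (P : pred I) (F : I -> 'cV[R]_N) w :
  dot (\sum_(i <- r | P i) F i) w = \sum_(i <- r | P i) dot (F i) w.
Proof. by apply: (big_morph (fun u => dot u w)); [move=> ? ?; exact: dotDl | exact: dot0l]. Qed.

Lemma dotr0 v : dot v 0 = 0.
Proof. by rewrite dotC dot0l. Qed.

Lemma dotBr u v w : dot w (u - v) = dot w u - dot w v.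
Proof. by rewrite dotC dotBl dotC [dot v w]dotC. Qed.

Lemma dotZr a u w : dot w (a *: u) = a * dot w u.
Proof. by rewrite dotC dotZl dotC. Qed.

Lemma dot_ge0 v : 0 <= dot v v.
Proof. by apply: sumr_ge0 => l _; rewrite -expr2 sqr_ge0. Qed.

Lemma dot_eq0 v : (dot v v == 0) = (v == 0).
Proof.
apply/idP/eqP => [|->]; last by rewrite dot0l.
rewrite psumr_eq0 => [/allP v0|l _]; last by rewrite -expr2 sqr_ge0.
apply/matrixP => l j; rewrite (ord1 j) mxE.
by have /implyP/(_ isT) := v0 l (mem_index_enum l); rewrite mulf_eq0 orbb => /eqP.
Qed.

Lemma sqr_enorm v : enorm v ^+ 2 = dot v v.
Proof. by rewrite sqr_sqrtr ?dot_ge0. Qed.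

Lemma cauchy_schwarz v w : dot v w ^+ 2 <= dot v v * dot w w.
Proof.
have [/eqP|w_neq0] := eqVneq (dot w w) 0.
  by rewrite dot_eq0 => /eqP ->; rewrite !dotr0 expr0n mulr0.
pose t := dot v w / dot w w.
have expand : dot (v - t *: w) (v - t *: w) * dot w w
              = dot v v * dot w w - dot v w ^+ 2.
  rewrite !(dotBl, dotBr, dotZl, dotZr) [dot w v]dotC /t.
  by field; rewrite w_neq0.
by rewrite -subr_ge0 -expand mulr_ge0 ?dot_ge0.
Qed.

Lemma dot_le_of_proj_int v w (c : int) :
  c != 0 -> dot v w = c%:~R * dot w w -> dot w w <= dot v v.
Proof.
move=> c_neq0 vw.
have [->|w_neq0] := eqVneq (dot w w) 0; first exact: dot_ge0.
have w_gt0 : 0 < dot w w by rewrite lt_def w_neq0 dot_ge0.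
have c2_ge1 : 1 <= (c%:~R : R) ^+ 2.
  rewrite -rmorphXn /= ler1z -(real_normK (num_real _)).
  by rewrite exprn_ege1 // -gtz0_ge1 normr_gt0.
have := cauchy_schwarz v w.
rewrite vw exprMn [dot w w ^+ 2]expr2 mulrA ler_pM2r // => /(le_trans _); apply.
by rewrite ler_peMl ?dot_ge0.
Qed.

End Dot.

Section GramSchmidt.
Context {R : realType} {N : nat}.
Implicit Types (G bs : seq 'cV[R]_N) (b : 'cV[R]_N).

Definition orthogonal_family G := forall i j, (i < size G)%N -> (j < size G)%N ->
  i != j -> dot (nth 0 G i) (nth 0 G j) = 0.

Lemma gram_schmidt_rcons bs b : gram_schmidt (rcons bs b) =
  rcons (gram_schmidt bs) (b - \sum_(c <- gram_schmidt bs) (dot b c / dot c c) *: c).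
Proof. by rewrite /gram_schmidt foldl_rcons. Qed.

Lemma size_gram_schmidt bs : size (gram_schmidt bs) = size bs.
Proof. by elim/last_ind: bs => // bs b IH; rewrite gram_schmidt_rcons !size_rcons IH. Qed.

Lemma dot_sub_proj G b j : orthogonal_family G -> (j < size G)%N ->
  dot (b - \sum_(c <- G) (dot b c / dot c c) *: c) (nth 0 G j) = 0.
Proof.
move=> oG jG; rewrite dotBl (big_nth 0) big_mkord dot_suml.
rewrite (bigD1 (Ordinal jG)) //= big1 ?addr0 => [|k kj]; last first.
  by rewrite -(inj_eq val_inj) in kj; rewrite dotZl (oG k j) ?mulr0.
have [/eqP|Gj_neq0] := eqVneq (dot (nth 0 G j) (nth 0 G j)) 0.
  by rewrite dot_eq0 => /eqP ->; rewrite !dotr0 subrr.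
by rewrite dotZl divfK // subrr.
Qed.

Lemma orthogonal_gram_schmidt bs : orthogonal_family (gram_schmidt bs).
Proof.
elim/last_ind: bs => [|bs b IH] i j //.
rewrite gram_schmidt_rcons size_rcons !ltnS [(i <= _)%N]leq_eqVlt [(j <= _)%N]leq_eqVlt.
move=> /orP[/eqP->|lt_i] /orP[/eqP->|lt_j] ij.
- by rewrite eqxx in ij.
- by rewrite !nth_rcons ltnn eqxx lt_j; apply: dot_sub_proj.
- by rewrite !nth_rcons ltnn eqxx lt_i dotC; apply: dot_sub_proj.
- by rewrite !nth_rcons lt_i lt_j; apply: IH.
Qed.

Lemma gram_schmidt_decomp bs l : (l < size bs)%N ->
  exists c : nat -> R, nth 0 bs l = gs_vec bs l + \sum_(j < l) c j *: gs_vec bs j.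
Proof.
elim/last_ind: bs => // bs b IH.
rewrite /gs_vec gram_schmidt_rcons size_rcons ltnS leq_eqVlt => /orP[/eqP->|lt_l].
  exists (fun j => dot b (gs_vec bs j) / dot (gs_vec bs j) (gs_vec bs j)).
  rewrite !nth_rcons size_gram_schmidt ltnn eqxx.
  set w := b - _.
  suff -> : \sum_(j < size bs) (dot b (gs_vec bs j) / dot (gs_vec bs j) (gs_vec bs j)) *:
              (rcons (gram_schmidt bs) w)`_j
            = \sum_(c <- gram_schmidt bs) (dot b c / dot c c) *: c by rewrite subrK.
  rewrite (big_nth 0) big_mkord size_gram_schmidt; apply: eq_bigr => j _.
  by rewrite nth_rcons size_gram_schmidt ltn_ord.
rewrite !nth_rcons size_gram_schmidt lt_l.
have [c ->] := IH lt_l; exists c; congr (_ + _).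
by apply: eq_bigr => j _; rewrite nth_rcons size_gram_schmidt (ltn_trans (ltn_ord j) lt_l).
Qed.

Lemma gs_vec0 bs : gs_vec bs 0 = head 0 bs.
Proof.
case: bs => // b bs.
by have [c] := @gram_schmidt_decomp (b :: bs) 0 isT; rewrite big_ord0 addr0 => <-.
Qed.

Lemma dot_basis_gs_lt bs j k : (j < k)%N -> (k < size bs)%N ->
  dot (nth 0 bs j) (gs_vec bs k) = 0.
Proof.
move=> jk kbs; have jbs := ltn_trans jk kbs.
have oG := @orthogonal_gram_schmidt bs; rewrite /orthogonal_family size_gram_schmidt in oG.
have [c ->] := @gram_schmidt_decomp bs j jbs.
rewrite dotDl dot_suml big1 ?addr0 => [|l _]; first by rewrite oG // neq_ltn jk.
by rewrite dotZl oG ?mulr0 ?(ltn_trans (ltn_ord l)) // neq_ltn (ltn_trans (ltn_ord l) jk).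
Qed.

Lemma dot_basis_gs_diag bs k : (k < size bs)%N ->
  dot (nth 0 bs k) (gs_vec bs k) = dot (gs_vec bs k) (gs_vec bs k).
Proof.
move=> kbs; have oG := @orthogonal_gram_schmidt bs.
rewrite /orthogonal_family size_gram_schmidt in oG.
have [c ->] := @gram_schmidt_decomp bs k kbs.
rewrite dotDl dot_suml big1 ?addr0 // => l _.
by rewrite dotZl oG ?mulr0 ?(ltn_trans (ltn_ord l)) // neq_ltn ltn_ord.
Qed.

End GramSchmidt.

Section LLL.
Context {R : realType} {N : nat}.
Variable bs : seq 'cV[R]_N.
Hypothesis bs_LLL : LLL_reduced bs.

Local Notation D k := (dot (gs_vec bs k) (gs_vec bs k)).

Lemma LLL_gs_step k : (0 < k < size bs)%N -> D k.-1 <= 2 * D k.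
Proof.
move=> k_bs; have [size_red lovasz] := bs_LLL.
have := lovasz k k_bs.
have : `|gs_mu bs k k.-1| <= 1 / 2.
  by apply: size_red; case/andP: k_bs => k_gt0 ->; rewrite ltn_predL k_gt0.
have := dot_ge0 (gs_vec bs k.-1).
set mu := gs_mu bs k k.-1; rewrite ler_norml => D_ge0 /andP[mu_ge mu_le] lovasz_k.
have mu2_le : mu ^+ 2 <= 1 / 4 by nra.
have : mu ^+ 2 * D k.-1 <= 1 / 4 * D k.-1 by rewrite ler_wpM2r.
nra.
Qed.

Lemma LLL_head_le_gs k : (k < size bs)%N -> dot (head 0 bs) (head 0 bs) <= 2 ^+ k * D k.
Proof.
rewrite -gs_vec0; elim: k => [|k IH] k_bs; first by rewrite expr0 mul1r.
apply: (le_trans (IH (ltnW k_bs))).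
by rewrite exprSr -mulrA ler_wpM2l ?exprn_ge0 // (LLL_gs_step k.+1).
Qed.

Lemma LLL_head_short_comb K (z : 'I_K -> int) : size bs = K -> (exists l, z l != 0) ->
  dot (head 0 bs) (head 0 bs) <=
    2 ^+ K.-1 * dot (\sum_(l < K) (z l)%:~R *: nth 0 bs l) (\sum_(l < K) (z l)%:~R *: nth 0 bs l).
Proof.
move=> size_bs [l0 z_l0]; set v := \sum_(l < K) _.
have [k z_k k_max] := @arg_maxnP _ l0 (fun l => z l != 0) val z_l0.
have k_bs : (k < size bs)%N by rewrite size_bs.
have v_gs : dot v (gs_vec bs k) = (z k)%:~R * D k.
  rewrite /v dot_suml (bigD1 k) //= big1 ?addr0 => [|j j_neq_k].
    by rewrite dotZl dot_basis_gs_diag.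
  have [->|z_j] := eqVneq (z j) 0; first by rewrite scale0r dot0l.
  have j_lt_k : (j < k)%N by rewrite ltn_neqAle (k_max j z_j : (j <= k)%N) andbT.
  by rewrite dotZl dot_basis_gs_lt ?mulr0.
apply: (le_trans (LLL_head_le_gs k k_bs)); apply: ler_pM.
- exact: exprn_ge0.
- exact: dot_ge0.
- by apply: ler_weXn2l; rewrite ?ler1n // -ltnS prednK ?(leq_ltn_trans _ (ltn_ord k)).
- exact: dot_le_of_proj_int v_gs.
Qed.

End LLL.

Lemma LLL_head_short {R : realType} {N K : nat} {G : 'M[R]_(N, K)} {bs : seq 'cV[R]_N}
    {v : 'cV[R]_N} :
  lattice_basis G bs -> LLL_reduced bs -> in_lattice G v -> v != 0 ->
  dot (head 0 bs) (head 0 bs) <= 2 ^+ K.-1 * dot v v.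
Proof.
move=> [size_bs _ span _] bs_LLL /span[z ->] v_neq0.
apply: LLL_head_short_comb => //; apply/existsP; apply: contraNT v_neq0.
by move=> /existsPn z0; apply/eqP/big1 => l _; move/negPn/eqP: (z0 l) => ->; rewrite scale0r.
Qed.

Section Complex.
Context {R : realType}.
Implicit Types a b : R[i].

Lemma crealD a b : creal (a + b) = creal a + creal b.
Proof. by case: a b => ? ? [] ? ?. Qed.

Lemma cimagD a b : cimag (a + b) = cimag a + cimag b.
Proof. by case: a b => ? ? [] ? ?. Qed.

Lemma creal_sum (I : Type) (r : seq I) (P : pred I) (F : I -> R[i]) :
  creal (\sum_(j <- r | P j) F j) = \sum_(j <- r | P j) creal (F j).
Proof. exact: (big_morph _ crealD). Qed.

Lemma cimag_sum (I : Type) (r : seq I) (P : pred I) (F : I -> R[i]) :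
  cimag (\sum_(j <- r | P j) F j) = \sum_(j <- r | P j) cimag (F j).
Proof. exact: (big_morph _ cimagD). Qed.

Lemma creal_mulrz a (k : int) : creal (a * k%:~R) = creal a * k%:~R.
Proof. by rewrite -(rmorph_int (@real_complex R) k); case: a => a1 a2 /=; rewrite mulr0 subr0. Qed.

Lemma cimag_mulrz a (k : int) : cimag (a * k%:~R) = cimag a * k%:~R.
Proof. by rewrite -(rmorph_int (@real_complex R) k); case: a => a1 a2 /=; rewrite mulr0 add0r. Qed.

Lemma sqr_cabs a : cabs a ^+ 2 = creal a ^+ 2 + cimag a ^+ 2.
Proof. by rewrite sqr_sqrtr // addr_ge0 ?sqr_ge0. Qed.

End Complex.

Lemma split_lshift m n (a : 'I_m) : split (lshift n a) = inl a.
Proof. exact: (unsplitK (inl a)). Qed.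

Lemma split_rshift m n (b : 'I_n) : split (rshift m b) = inr b.
Proof. exact: (unsplitK (inr b)). Qed.

Section LatCoord.
Context {m : nat}.
Variables x y : 'I_m -> int.

Definition lat_coord (l : 'I_(m + m)) : int :=
  match split l with inl a => x a | inr b => - y b end.

Lemma lat_coord_lshift a : lat_coord (lshift m a) = x a.
Proof. by rewrite /lat_coord split_lshift. Qed.

Lemma lat_coord_rshift b : lat_coord (rshift m b) = - y b.
Proof. by rewrite /lat_coord split_rshift. Qed.

Lemma abs_lat_coord_le l : (`|lat_coord l| <= \max_(k < m) maxn `|x k| `|y k|)%N.
Proof.
rewrite /lat_coord; case: (split l) => a; last rewrite abszN.
  exact: leq_trans (leq_maxl _ _) (@leq_bigmax _ (fun k => maxn `|x k| `|y k|) a).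
exact: leq_trans (leq_maxr _ _) (@leq_bigmax _ (fun k => maxn `|x k| `|y k|) a).
Qed.

Lemma sum_sqr_lat_coord_le {R : realFieldType} :
  \sum_(l < m + m) (lat_coord l)%:~R ^+ 2
    <= (m + m)%:R * (\max_(k < m) maxn `|x k| `|y k|)%:R ^+ 2 :> R.
Proof.
have coord_le l : (lat_coord l)%:~R ^+ 2 <= (\max_(k < m) maxn `|x k| `|y k|)%:R ^+ 2 :> R.
  rewrite -real_normK ?num_real // -intr_norm -natr_absz.
  by rewrite lerXn2r ?nnegrE ?ler0n // ler_nat abs_lat_coord_le.
apply: le_trans (ler_sum _ (fun l _ => coord_le l)) _.
by rewrite sumr_const card_ord mulr_natl.
Qed.

End LatCoord.

Section Lattice.
Context {R : realType} {M : fieldExtType rat} {m n : nat}.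
Variables (sigma : 'I_m -> {rmorphism M -> R[i]}) (omega : 'I_m -> M).
Variables (rts : 'I_m -> 'I_n -> R[i]) (h : 'I_m) (i : 'I_n) (H : R).

Local Notation G := (lat_gen sigma omega rts h i H).
Local Notation lat_vec z := (\sum_(l < m + m) (z l)%:~R *: col l G).
Local Notation lat_form z := (\sum_(l < m + m) lat_entry sigma omega rts h i l * (z l)%:~R).

Lemma lat_vecE (z : 'I_(m + m) -> int) r :
  lat_vec z r 0 = \sum_(l < m + m) (z l)%:~R * G r l.
Proof. by rewrite summxE; apply: eq_bigr => l _; rewrite !mxE. Qed.

Lemma lat_vec_top (z : 'I_(m + m) -> int) r : lat_vec z (lshift (1 + 1) r) 0 = (z r)%:~R.
Proof.
rewrite lat_vecE (bigD1 r) //= big1 ?addr0 => [|l l_neq_r].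
  by rewrite col_mxEu mxE eqxx mulr1.
by rewrite col_mxEu mxE eq_sym (negbTE l_neq_r) mulr0.
Qed.

Lemma lat_vec_re (z : 'I_(m + m) -> int) :
  lat_vec z (rshift (m + m) (lshift 1 ord0)) 0 = H * creal (lat_form z).
Proof.
rewrite lat_vecE creal_sum mulr_sumr; apply: eq_bigr => l _.
by rewrite col_mxEd col_mxEu mxE creal_mulrz mulrCA [(z l)%:~R * _]mulrC.
Qed.

Lemma lat_vec_im (z : 'I_(m + m) -> int) :
  lat_vec z (rshift (m + m) (rshift 1 ord0)) 0 = H * cimag (lat_form z).
Proof.
rewrite lat_vecE cimag_sum mulr_sumr; apply: eq_bigr => l _.
by rewrite col_mxEd col_mxEd mxE cimag_mulrz mulrCA [(z l)%:~R * _]mulrC.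
Qed.

Lemma dot_lat_vec (z : 'I_(m + m) -> int) :
  dot (lat_vec z) (lat_vec z) = \sum_(l < m + m) (z l)%:~R ^+ 2 + (H * cabs (lat_form z)) ^+ 2.
Proof.
rewrite /dot big_split_ord /=; congr (_ + _).
  by apply: eq_bigr => r _; rewrite lat_vec_top expr2.
rewrite big_split_ord /= !big_ord1 -!expr2 exprMn sqr_cabs mulrDr -!exprMn.
rewrite -lat_vec_re -lat_vec_im.
by congr (lat_vec z _ 0 ^+ 2 + lat_vec z _ 0 ^+ 2); apply: val_inj.
Qed.

Lemma lat_form_lat_coord (x y : 'I_m -> int) :
  lat_form (lat_coord x y) = \sum_(k < m) sigma h (omega k) * (x k)%:~R
                               - \sum_(k < m) rts h i * sigma h (omega k) * (y k)%:~R.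
Proof.
rewrite big_split_ord /= -sumrN; congr (_ + _); apply: eq_bigr => a _.
  by rewrite /lat_entry split_lshift lat_coord_lshift.
by rewrite /lat_entry split_rshift lat_coord_rshift mulrNz mulrN.
Qed.

Lemma LLL_head_long_form_ge (bs : seq 'cV[R]_(m + m + (1 + 1))) (x y : 'I_m -> int)
    (A0 : R) :
  0 <= H -> 0 <= A0 -> lattice_basis G bs -> LLL_reduced bs ->
  (exists k, x k != 0 \/ y k != 0) ->
  (\max_(k < m) maxn `|x k| `|y k|)%:R <= A0 ->
  Num.sqrt (((2 * m + 1) * 2 ^ (2 * m - 1))%:R) * A0 <= enorm (head 0 bs) ->
  A0 <= H * cabs (\sum_(k < m) sigma h (omega k) * (x k)%:~R
                  - \sum_(k < m) rts h i * sigma h (omega k) * (y k)%:~R).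
Proof.
move=> H_ge0 A0_ge0 bs_basis bs_LLL xy_neq0 A_le b1_ge.
rewrite -lat_form_lat_coord; set z := lat_coord x y; set c := cabs _.
have [l z_l] : exists l, z l != 0.
  case: xy_neq0 => k [x_k|y_k]; first by exists (lshift m k); rewrite /z lat_coord_lshift.
  by exists (rshift m k); rewrite /z lat_coord_rshift oppr_eq0.
have v_neq0 : lat_vec z != 0.
  apply: contraNneq z_l => v0; have := lat_vec_top z l.
  by rewrite v0 mxE => /esym/eqP; rewrite intr_eq0.
have := LLL_head_short bs_basis bs_LLL (ex_intro _ z erefl) v_neq0.
rewrite dot_lat_vec (_ : (m + m).-1 = (2 * m - 1)%N); last by rewrite mul2n -addnn subn1.
have S_le : \sum_(l < m + m) (z l)%:~R ^+ 2 <= (m + m)%:R * A0 ^+ 2.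
  apply: le_trans (sum_sqr_lat_coord_le x y) _.
  by rewrite ler_wpM2l // lerXn2r ?nnegrE ?ler0n.
have b1_sqr : ((2 * m + 1) * 2 ^ (2 * m - 1))%:R * A0 ^+ 2 <= dot (head 0 bs) (head 0 bs).
  rewrite -sqr_enorm -[X in X * _]sqr_sqrtr ?ler0n // -exprMn.
  by rewrite ler_sqr ?nnegrE ?mulr_ge0 ?sqrtr_ge0.
move=> /(le_trans b1_sqr); rewrite -/c natrM natrX mulrAC [X in X <= _]mulrC.
rewrite ler_pM2l ?exprn_gt0 // => key.
have Hc_ge0 : 0 <= H * c by rewrite mulr_ge0 ?sqrtr_ge0.
rewrite natrD in S_le; rewrite natrD natrM in key.
rewrite -ler_sqr ?nnegrE //; lra.
Qed.

End Lattice.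

Lemma ler_powR_invn (R : realType) (a b : R) (k : nat) :
  0 <= a -> (0 < k)%N -> a ^+ k <= b -> a <= powR b k%:R^-1.
Proof.
move=> a_ge0 k_gt0 ak_le.
have k_neq0 : k%:R != 0 :> R by rewrite pnatr_eq0 -lt0n.
have -> : a = (a ^+ k) `^ k%:R^-1 by rewrite -powR_mulrn // -powRrM mulfV // powRr1.
apply: ge0_ler_powR; rewrite ?invr_ge0 ?ler0n ?nnegrE ?exprn_ge0 //.
exact: le_trans (exprn_ge0 _ a_ge0) ak_le.
Qed.

Theorem theorem3 (R : realType) (M : fieldExtType rat) (m : nat)
  (hm : \dim {:M} = m)
  (sigma : 'I_m -> {rmorphism M -> R[i]}) (hsigma : distinct_embeddings sigma)
  (omega : 'I_m -> M) (homega : integral_basis omega)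
  (n : nat) (hn : (1 < n)%N)
  (f : {poly M}) (hfmon : f \is monic) (hfirr : irreducible_poly f)
  (hfsize : size f = n.+1)
  (rts : 'I_m -> 'I_n -> R[i])
  (hrts : forall j : 'I_m, map_poly (sigma j) f = \prod_(k < n) ('X - (rts j k)%:P))
  (halpha : forall (j : 'I_m) (k : 'I_n), alg_int (rts j k))
  (mu : M) (hmu : alg_int mu) (hmu0 : mu != 0)
  (h : 'I_m) (i : 'I_n) (H : R) (hH : 0 < H)
  (bs : seq 'cV[R]_(m + m + (1 + 1)))
  (hbasis : lattice_basis (lat_gen sigma omega rts h i H) bs)
  (hLLL : LLL_reduced bs)
  (x y : 'I_m -> int) (hxy : exists k, x k != 0 \/ y k != 0)
  (A : R) (hAdef : A = (\max_(k < m) maxn `|x k|%N `|y k|%N)%:R)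
  (hineq : cabs (\sum_(k < m) sigma h (omega k) * (x k)%:~R
                 - \sum_(k < m) rts h i * sigma h (omega k) * (y k)%:~R)
           <= d_hi sigma omega rts mu h i * A ^- (n - 1))
  (A0 : R) (hA0 : 0 < A0) (hAA0 : A <= A0)
  (hb1 : Num.sqrt (((2 * m + 1) * 2 ^ (2 * m - 1))%:R) * A0 <= enorm (head 0 bs)) :
  A <= powR (d_hi sigma omega rts mu h i * H / A0) (n - 1)%:R^-1.
Proof.
set d := d_hi sigma omega rts mu h i in hineq *.
have A_le_A0 : (\max_(k < m) maxn `|x k| `|y k|)%:R <= A0 by rewrite -hAdef.
have form_ge := LLL_head_long_form_ge sigma omega rts h i H bs x y A0
                  (ltW hH) (ltW hA0) hbasis hLLL hxy A_le_A0 hb1.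
have A_gt0 : 0 < A.
  rewrite hAdef ltr0n; case: hxy => k xy_k.
  apply: leq_trans (@leq_bigmax _ (fun k => maxn `|x k| `|y k|) k).
  by rewrite leq_max !absz_gt0; case: xy_k => ->; rewrite ?orbT.
have An_gt0 : 0 < A ^+ (n - 1) := exprn_gt0 _ A_gt0.
apply: ler_powR_invn; [exact: ltW | by rewrite subn_gt0 |].
have := le_trans form_ge (ler_wpM2l (ltW hH) hineq).
rewrite mulrA ler_pdivlMr // => A0_le.
by rewrite ler_pdivlMr // mulrC [d * H]mulrC.
Qed.
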